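(* Let $N\ge1$, $n=\sum_{\nu=1}^N n_\nu$, $m\ge1$. For $\nu=1,\dots,N$ let $Q_\nu\in\mathbb{R}^{n_\nu\times n_\nu}$ be symmetric positive definite, $c_\nu\in\mathbb{R}^{n_\nu}$, and $X_\nu\subseteq\mathbb{R}^{n_\nu}$ nonempty, convex and closed; let $X=X_1\times\dots\times X_N$. Let $a\in\mathbb{R}^m$, $a\ge0$, $Q_y\in\mathbb{R}^{m\times m}$ positive definite diagonal, and $b(x)=B^\top x$, $l(x)=L^\top x$ with $B,L\in\mathbb{R}^{n\times m}$. Let $\varphi(x)=\sum_{i=1}^m a_i\max\{(Q_y^{-1}b(x))_i,l_i(x)\}$ and assume there exist $\rho\ge0$, $\omega_1,\omega_2\in\mathbb{R}$ with $\min\{0,\varphi(x)\}\ge\omega_1\|x\|+\omega_2$ for all $x\in X$ with $\|x\|>\rho$. Then the multi-leader-follower game described in the context has a Nash equilibrium.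
   Context: Notation: $x=(x_1,\dots,x_N)$, $x_\nu\in\mathbb{R}^{n_\nu}$, $x_{-\nu}$ = all components other than $x_\nu$. Multi-leader-follower game: given $x$, the follower solves $\min_{y\in\mathbb{R}^m}\tfrac12 y^\top Q_y y-b(x)^\top y$ s.t. $y\ge l(x)$, with unique solution $y(x)=\max\{Q_y^{-1}b(x),l(x)\}$ (componentwise); leader $\nu$ solves $\min_{x_\nu\in X_\nu}\theta_\nu(x_\nu,x_{-\nu})=\tfrac12 x_\nu^\top Q_\nu x_\nu+c_\nu^\top x_\nu+a^\top y(x)$. A Nash equilibrium is $x^*\in X$ with $\theta_\nu(x^*_\nu,x^*_{-\nu})\le\theta_\nu(x_\nu,x^*_{-\nu})$ for all $x_\nu\in X_\nu$ and all $\nu$. *)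

From HB Require Import structures.
From mathcomp Require Import all_boot all_order all_algebra.
From mathcomp Require Import all_classical all_reals all_analysis.
Set Implicit Arguments. Unset Strict Implicit. Unset Printing Implicit Defensive.
Import Order.TTheory GRing.Theory Num.Theory.
Import numFieldTopology.Exports numFieldNormedType.Exports.
Local Open Scope ring_scope.
Local Open Scope classical_set_scope.

Section MLFG.
Variable R : realType.

Definition spd k (Q : 'M[R]_k) : Prop :=
  Q^T = Q /\ forall v : 'cV[R]_k, v != 0 -> 0 < (v^T *m Q *m v) 0 0.

Definition pos_diag k (Q : 'M[R]_k) : Prop :=
  is_diag_mx Q /\ forall i, 0 < Q i i.

Definition convex_set k (S : set 'cV[R]_k) : Prop :=
  forall u v, S u -> S v -> forall t : R, 0 <= t <= 1 ->
    S (t *: u + (1 - t) *: v).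

Variables (N : nat) (nn : 'I_N -> nat) (m : nat).

Definition profile := forall nu : 'I_N, 'cV[R]_(nn nu).

Definition pnorm (x : profile) : R :=
  Num.sqrt (\sum_(nu < N) \sum_(i < nn nu) (x nu i 0) ^+ 2).

(* B^T x for B in R^{n x m} given by its row blocks B_nu in R^{n_nu x m} *)
Definition blockT (B : forall nu : 'I_N, 'M[R]_(nn nu, m)) (x : profile)
  : 'cV[R]_m := \sum_(nu < N) (B nu)^T *m x nu.

Definition follower (Qy : 'M[R]_m) (B L : forall nu : 'I_N, 'M[R]_(nn nu, m))
  (x : profile) : 'cV[R]_m :=
  \col_i Num.max ((invmx Qy *m blockT B x) i 0) (blockT L x i 0).

Definition theta (Q : forall nu : 'I_N, 'M[R]_(nn nu))
  (c : forall nu : 'I_N, 'cV[R]_(nn nu)) (a : 'cV[R]_m) (Qy : 'M[R]_m)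
  (B L : forall nu : 'I_N, 'M[R]_(nn nu, m)) (nu : 'I_N) (x : profile) : R :=
  (2^-1 * ((x nu)^T *m Q nu *m x nu) 0 0 + ((c nu)^T *m x nu) 0 0
   + (a^T *m follower Qy B L x) 0 0).

Definition phi (a : 'cV[R]_m) (Qy : 'M[R]_m)
  (B L : forall nu : 'I_N, 'M[R]_(nn nu, m)) (x : profile) : R :=
  \sum_(i < m) a i 0 * Num.max ((invmx Qy *m blockT B x) i 0) (blockT L x i 0).

Definition inX (X : forall nu : 'I_N, set 'cV[R]_(nn nu)) (x : profile) : Prop :=
  forall nu, X nu (x nu).

Definition nash_equilibrium (X : forall nu : 'I_N, set 'cV[R]_(nn nu))
  (Q : forall nu : 'I_N, 'M[R]_(nn nu)) (c : forall nu : 'I_N, 'cV[R]_(nn nu))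
  (a : 'cV[R]_m) (Qy : 'M[R]_m) (B L : forall nu : 'I_N, 'M[R]_(nn nu, m))
  (xs : profile) : Prop :=
  inX X xs /\
  forall nu (xnu : 'cV[R]_(nn nu)), X nu xnu ->
    theta Q c a Qy B L nu xs <= theta Q c a Qy B L nu (@dfwith _ (fun j => 'cV[R]_(nn j)) xs nu xnu).

End MLFG.

(** The game is an exact potential game: with
    [own_cost nu v = v^T Q_nu v / 2 + c_nu^T v], every objective splits as
    [theta_nu x = own_cost nu x_nu + phi x], so [theta_nu] and the potential
    [P x = \sum_nu own_cost nu x_nu + phi x] differ by a quantity that does not
    depend on [x_nu]; hence any minimiser of [P] over [X] is a Nash equilibrium.
    Positive definiteness bounds [\sum_nu own_cost nu x_nu] below by
    [lam |x|^2 - C], and the growth hypothesis bounds [phi x] below by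
    [w1 |x| + w2] far out, so [P] is coercive on the closed set [X]; being
    continuous, it attains its minimum on the compact part of [X] where
    [|x|] is bounded. *)

From HB Require Import structures.
From mathcomp Require Import all_boot all_order all_algebra.
From mathcomp Require Import all_classical all_reals all_analysis.
From mathcomp Require Import ring lra.
Import Order.TTheory GRing.Theory Num.Theory.
Import numFieldTopology.Exports numFieldNormedType.Exports.
Set Implicit Arguments. Unset Strict Implicit.
Local Open Scope ring_scope.
Local Open Scope classical_set_scope.

Lemma ler_sum_term (R : numDomainType) (I : finType) (F : I -> R) (i : I) :
  (forall j, 0 <= F j) -> F i <= \sum_j F j.
Proof. by move=> F_ge0; rewrite (bigD1 i) //= lerDl sumr_ge0. Qed.

Lemma exists_pos_lower_bound (R : realFieldType) (I : finType) (l : I -> R) :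
  (forall i, 0 < l i) -> exists2 e, 0 < e & forall i, e <= l i.
Proof.
move=> l_gt0; have linv_ge0 i : 0 <= (l i)^-1 by rewrite invr_ge0 ltW.
have s_gt0 : 0 < 1 + \sum_i (l i)^-1 by rewrite ltr_wpDr ?sumr_ge0.
exists (1 + \sum_i (l i)^-1)^-1 => [|i]; first by rewrite invr_gt0.
rewrite -[l i]invrK lef_pV2 ?posrE ?invr_gt0 //.
by rewrite (le_trans (ler_sum_term _ linv_ge0)) // lerDr.
Qed.

Lemma ler_norm_sqrt (R : rcfType) (a b : R) : a ^+ 2 <= b -> `|a| <= Num.sqrt b.
Proof.
move=> ab; rewrite -sqrtr_sqr ler_sqrt //.
exact: le_trans (sqr_ge0 a) ab.
Qed.

Lemma quadratic_eventually_gt (R : realFieldType) (k w z : R) : 0 < k ->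
  exists r, forall p, r < p -> z < k * p ^+ 2 + w * p.
Proof.
move=> k_gt0; set s := (`|w| + `|z|) / k; exists (1 + s) => p p_gt.
have ks : k * s = `|w| + `|z| by rewrite mulrC divfK ?gt_eqF.
have s_ge0 : 0 <= s by rewrite /s divr_ge0 // ltW.
have z_ge0 := normr_ge0 z; have zN := ler_norm z.
have wN := ler_norm (- w); rewrite normrN in wN.
have kp_gt : k + `|z| < k * p - `|w| by nra.
have kp_le : k * p - `|w| <= p * (k * p - `|w|) by rewrite ler_peMl; lra.
nra.
Qed.

Section EntrywiseContinuity.
Variables (R : realType) (T : topologicalType).

Definition mx_continuous p q (F : T -> 'M[R]_(p, q)) :=
  forall i j, continuous (fun x => F x i j).

Lemma continuous_sumr n (F : 'I_n -> T -> R) :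
  (forall i, continuous (F i)) -> continuous (fun x => \sum_(i < n) F i x).
Proof. by move=> F_cont; apply: continuous_big => //; exact: add_continuous. Qed.

Lemma mx_continuous_cst p q (A : 'M[R]_(p, q)) : mx_continuous (fun=> A).
Proof. by move=> i j; exact: cst_continuous. Qed.

Lemma mx_continuous_tr p q (F : T -> 'M[R]_(p, q)) :
  mx_continuous F -> mx_continuous (fun x => (F x)^T).
Proof. by move=> F_cont i j; under eq_fun do rewrite mxE; exact: F_cont. Qed.

Lemma mx_continuous_mul p q r (F : T -> 'M[R]_(p, q)) (G : T -> 'M[R]_(q, r)) :
  mx_continuous F -> mx_continuous G -> mx_continuous (fun x => F x *m G x).
Proof.
move=> F_cont G_cont i j; under eq_fun do rewrite mxE.
by apply: continuous_sumr => k x; exact: (continuousM (F_cont i k x) (G_cont k j x)).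
Qed.

Lemma mx_continuous_sum p q n (F : 'I_n -> T -> 'M[R]_(p, q)) :
  (forall k, mx_continuous (F k)) -> mx_continuous (fun x => \sum_(k < n) F k x).
Proof.
move=> F_cont i j; under eq_fun do rewrite summxE.
by apply: continuous_sumr => k; exact: F_cont.
Qed.

End EntrywiseContinuity.

Lemma mx_continuous_id (R : realType) p q : mx_continuous (fun A : 'M[R]_(p, q) => A).
Proof. by move=> i j; exact: coord_continuous. Qed.

Lemma continuous_trmx (R : realType) p q : continuous (@trmx R p q).
Proof.
move=> A s /= /nbhs_ballP [e e_gt0 es].
apply/nbhs_ballP; exists e => //= B [_ AB]; apply: es; split => // i j.
by rewrite !mxE; exact: AB.
Qed.

Lemma minimizer_of_compact_core (T : topologicalType) (R : realType)
    (f : T -> R) (A K : set T) (x0 : T) :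
  continuous f -> compact K -> K `<=` A -> K x0 ->
  (forall x, A x -> ~ K x -> f x0 <= f x) ->
  exists2 xs, A xs & forall x, A x -> f xs <= f x.
Proof.
move=> f_cont K_cpt KA Kx0 f_out.
have [xs /set_mem Kxs xs_min] :=
  compact_EVT_min (ex_intro _ x0 Kx0) K_cpt (continuous_subspaceT f_cont).
exists xs => [|x Ax]; first exact: KA.
have [Kx|nKx] := pselect (K x); first exact/xs_min/mem_set.
exact: le_trans (xs_min _ (mem_set Kx0)) (f_out _ Ax nKx).
Qed.

Definition cube (R : realType) k (M : R) :=
  [set v : 'cV[R]_k | forall i, `|v i 0| <= M].
Arguments cube {R} k M.

Section QuadraticForms.
Variable R : realType.

Definition sqnorm k (v : 'cV[R]_k) := \sum_i v i 0 ^+ 2.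
Definition qform k (Q : 'M[R]_k) (v : 'cV[R]_k) := (v^T *m Q *m v) 0 0.

Lemma sqnorm_ge0 k (v : 'cV[R]_k) : 0 <= sqnorm v.
Proof. by apply: sumr_ge0 => i _; exact: sqr_ge0. Qed.

Lemma sqnorm0 k : sqnorm (0 : 'cV[R]_k) = 0.
Proof. by rewrite /sqnorm big1 // => i _; rewrite mxE expr0n. Qed.

Lemma sqnorm_gt0 k (v : 'cV[R]_k) : v != 0 -> 0 < sqnorm v.
Proof.
move=> v_neq0; rewrite lt_def sqnorm_ge0 andbT; apply: contraNN v_neq0 => /eqP v0.
apply/eqP/matrixP => i j; rewrite ord1 mxE.
have /eqP := psumr_eq0P (fun i _ => sqr_ge0 (v i 0)) v0 (i := i) isT.
by rewrite sqrf_eq0 => /eqP.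
Qed.

Lemma sqnormZ k t (v : 'cV[R]_k) : sqnorm (t *: v) = t ^+ 2 * sqnorm v.
Proof. by rewrite /sqnorm mulr_sumr; apply: eq_bigr => i _; rewrite mxE exprMn. Qed.

Lemma abs_entry_le_sqrt_sqnorm k (v : 'cV[R]_k) i : `|v i 0| <= Num.sqrt (sqnorm v).
Proof. by apply: ler_norm_sqrt; apply: ler_sum_term => j; exact: sqr_ge0. Qed.

Lemma qform0 k (Q : 'M[R]_k) : qform Q 0 = 0.
Proof. by rewrite /qform mulmx0 mxE. Qed.

Lemma qformZ k (Q : 'M[R]_k) t v : qform Q (t *: v) = t ^+ 2 * qform Q v.
Proof.
rewrite /qform linearZ /= [(t *: v)^T]linearZ /=.
by rewrite -!scalemxAl scalerA mxE expr2.
Qed.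

Lemma continuous_sqnorm k : continuous (@sqnorm k).
Proof.
apply: continuous_sumr => i; under eq_fun do rewrite expr2.
have vi_cont := @mx_continuous_id R k 1 i 0.
by move=> v; exact: (continuousM (vi_cont v) (vi_cont v)).
Qed.

Lemma continuous_qform k (Q : 'M[R]_k) : continuous (qform Q).
Proof.
have id_cont := @mx_continuous_id R k 1.
have qform_cont := mx_continuous_mul (mx_continuous_mul (mx_continuous_tr id_cont)
  (mx_continuous_cst (A := Q))) id_cont.
exact: qform_cont 0 0.
Qed.

Lemma compact_cube k (M : R) : compact (cube k M).
Proof.
have -> : cube k M = trmx @` [set r : 'rV[R]_k | forall i, `[- M, M] (r ord0 i)].
  apply/seteqP; split => [v vM|_ [r rM <-] i].
    by exists v^T; [move=> i; rewrite mxE /= in_itv /= -ler_norml; exact: vM | exact: trmxK].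
  by move: (rM i); rewrite mxE /= in_itv /= -ler_norml.
apply: (continuous_compact (continuous_subspaceT (@continuous_trmx R 1 k))).
by apply: (@rV_compact R k (fun=> `[- M, M]%classic)) => i; exact: segment_compact.
Qed.

Lemma pd_qform_ge k (Q : 'M[R]_k) : (forall v, v != 0 -> 0 < qform Q v) ->
  exists2 lam, 0 < lam & forall v, lam * sqnorm v <= qform Q v.
Proof.
move=> Q_pd; pose S := cube k 1 `&` [set v | sqnorm v = 1].
have S_cpt : compact S.
  apply: compact_closedI; first exact: compact_cube.
  apply: (@preimage_closed _ _ (@sqnorm k) [set x | x = 1]); last exact: closed_eq.
  by move=> v _; exact: continuous_sqnorm.
have normalize v : v != 0 ->
    S ((Num.sqrt (sqnorm v))^-1 *: v) /\
    qform Q v = qform Q ((Num.sqrt (sqnorm v))^-1 *: v) * sqnorm v.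
  move=> v_neq0; have v_gt0 := sqnorm_gt0 v_neq0.
  have sqrt_neq0 : Num.sqrt (sqnorm v) != 0 by rewrite gt_eqF ?sqrtr_gt0.
  have sqrt_sqr : Num.sqrt (sqnorm v) ^+ 2 = sqnorm v by rewrite sqr_sqrtr ?ltW.
  have u1 : sqnorm ((Num.sqrt (sqnorm v))^-1 *: v) = 1.
    by rewrite sqnormZ exprVn sqrt_sqr mulVf ?gt_eqF.
  split; first split => //= i.
    by rewrite -(sqrtr1 R) -u1; exact: abs_entry_le_sqrt_sqnorm.
  by rewrite qformZ exprVn sqrt_sqr mulrAC mulVf ?gt_eqF ?mul1r.
have [[u0 Su0]|S0] := pselect (S !=set0); last first.
  exists 1 => // v; have [->|v_neq0] := eqVneq v 0; first by rewrite sqnorm0 qform0 mulr0.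
  by have [Su _] := normalize v v_neq0; exfalso; apply: S0; eexists; exact: Su.
have [u /set_mem [_ u1] u_min] := compact_EVT_min (ex_intro _ u0 Su0) S_cpt
  (continuous_subspaceT (@continuous_qform k Q)).
exists (qform Q u).
  by apply: Q_pd; apply: contra_eq_neq u1 => ->; rewrite sqnorm0 eq_sym oner_eq0.
move=> v; have [->|v_neq0] := eqVneq v 0; first by rewrite sqnorm0 qform0 mulr0.
have [Sv ->] := normalize v v_neq0.
by apply: ler_wpM2r; [exact: sqnorm_ge0 | exact/u_min/mem_set].
Qed.

Lemma young_dot_ge k (c v : 'cV[R]_k) (lam : R) : 0 < lam ->
  - (sqnorm c / lam) - lam / 4 * sqnorm v <= (c^T *m v) 0 0.
Proof.
move=> lam_gt0.
have dot_sum : (c^T *m v) 0 0 = \sum_i c i 0 * v i 0.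
  by rewrite mxE; apply: eq_bigr => i _; rewrite mxE.
suff : 0 <= \sum_i (c i 0 * v i 0 + (c i 0 ^+ 2 / lam + lam / 4 * v i 0 ^+ 2)).
  by rewrite /sqnorm !big_split /= -mulr_suml -mulr_sumr -dot_sum; lra.
apply: sumr_ge0 => i _.
have -> : c i 0 * v i 0 + (c i 0 ^+ 2 / lam + lam / 4 * v i 0 ^+ 2)
    = lam * (c i 0 / lam + v i 0 / 2) ^+ 2 by field; rewrite gt_eqF.
by rewrite mulr_ge0 ?sqr_ge0 ?ltW.
Qed.

End QuadraticForms.

(* Equips [profile R nn] with the product topology, as [tychonoff] requires. *)
Import ArrowAsProduct.

Section Profiles.
Variables (R : realType) (N : nat) (nn : 'I_N -> nat).
Implicit Types (x : profile R nn) (X : forall nu : 'I_N, set 'cV[R]_(nn nu)).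

Lemma pnorm_sqr x : pnorm x ^+ 2 = \sum_nu sqnorm (x nu).
Proof. by rewrite sqr_sqrtr //; apply: sumr_ge0 => nu _; exact: sqnorm_ge0. Qed.

Lemma abs_entry_le_pnorm x nu i : `|x nu i 0| <= pnorm x.
Proof.
apply: ler_norm_sqrt; apply: le_trans (ler_sum_term _ (fun mu => sqnorm_ge0 (x mu))).
by apply: ler_sum_term => j; exact: sqr_ge0.
Qed.

Lemma continuous_block nu (g : 'cV[R]_(nn nu) -> R) :
  continuous g -> continuous (fun x : profile R nn => g (x nu)).
Proof.
move=> g_cont x; apply: (@continuous_comp _ _ _ (fun x : profile R nn => x nu) g).
  exact: (@proj_continuous _ (fun nu => 'cV[R]_(nn nu)) nu).
exact: g_cont.
Qed.

Lemma mx_continuous_proj nu : mx_continuous (fun x : profile R nn => x nu).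
Proof. by move=> i j; exact: (continuous_block (@mx_continuous_id R (nn nu) 1 i j)). Qed.

Lemma inX_dfwith X x nu (v : 'cV[R]_(nn nu)) : inX X x -> X nu v ->
  inX X (@dfwith _ (fun j => 'cV[R]_(nn j)) x nu v).
Proof. by move=> xX vX mu; case: dfwithP => [|j _]; [exact: vX | exact: xX]. Qed.

Lemma coercive_exists_minimizer (f : profile R nn -> R) X :
  continuous f -> (forall nu, closed (X nu)) -> (forall nu, X nu !=set0) ->
  (forall y, exists r, forall x, inX X x -> r < pnorm x -> y < f x) ->
  exists2 xs, inX X xs & forall x, inX X x -> f xs <= f x.
Proof.
move=> f_cont X_closed X_neq0 f_coercive.
pose x0 : profile R nn := fun nu => projT1 (cid (X_neq0 nu)).
have x0X : inX X x0 by move=> nu; exact: (projT2 (cid (X_neq0 nu))).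
have [r f_gt] := f_coercive (f x0).
pose M := Num.max r (pnorm x0).
pose K := [set x : profile R nn | forall nu, (cube (nn nu) M `&` X nu) (x nu)].
apply: (@minimizer_of_compact_core _ _ f _ K x0 f_cont).
- apply: (@tychonoff _ (fun nu => 'cV[R]_(nn nu)) (fun nu => cube (nn nu) M `&` X nu)) => nu.
  by apply: compact_closedI; [exact: compact_cube | exact: X_closed].
- by move=> x Kx nu; case: (Kx nu).
- move=> nu; split => [i|]; last exact: x0X.
  by rewrite (le_trans (abs_entry_le_pnorm x0 i)) // le_max lexx orbT.
- move=> x xX Kx; apply/ltW/f_gt => //.
  have [nu] : exists nu, ~ (cube (nn nu) M `&` X nu) (x nu) by apply/existsNP.
  case/not_andP => [/existsNP [i /negP]|/(_ (xX nu))//].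
  rewrite -ltNge => M_lt.
  by apply: le_lt_trans (lt_le_trans M_lt (abs_entry_le_pnorm x i)); rewrite le_max lexx.
Qed.

End Profiles.

Section Game.
Variables (R : realType) (N : nat) (nn : 'I_N -> nat) (m : nat)
  (Q : forall nu : 'I_N, 'M[R]_(nn nu)) (c : forall nu : 'I_N, 'cV[R]_(nn nu))
  (a : 'cV[R]_m) (Qy : 'M[R]_m) (B L : forall nu : 'I_N, 'M[R]_(nn nu, m)).
Implicit Types (x : profile R nn) (X : forall nu : 'I_N, set 'cV[R]_(nn nu)).

Definition own_cost nu (v : 'cV[R]_(nn nu)) :=
  2^-1 * qform (Q nu) v + ((c nu)^T *m v) 0 0.

Definition potential x := \sum_nu own_cost (x nu) + phi a Qy B L x.

Lemma theta_own_cost nu x :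
  theta Q c a Qy B L nu x = own_cost (x nu) + phi a Qy B L x.
Proof.
rewrite /theta /own_cost /phi /qform mxE; congr (_ + _).
by rewrite mxE; apply: eq_bigr => i _; rewrite /follower !mxE.
Qed.

Lemma potential_dfwith x nu (v : 'cV[R]_(nn nu)) :
  potential (@dfwith _ (fun j => 'cV[R]_(nn j)) x nu v) - potential x =
  theta Q c a Qy B L nu (@dfwith _ (fun j => 'cV[R]_(nn j)) x nu v)
  - theta Q c a Qy B L nu x.
Proof.
rewrite /potential !theta_own_cost (bigD1 nu) //= [in X in _ - X](bigD1 nu) //= dfwithin.
rewrite (eq_bigr (fun mu => own_cost (x mu))); first by ring.
by move=> mu mu_neq; rewrite dfwithout // eq_sym.
Qed.

Lemma continuous_own_cost nu : continuous (@own_cost nu).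
Proof.
have lin_cont := mx_continuous_mul (mx_continuous_cst (A := (c nu)^T))
  (@mx_continuous_id R (nn nu) 1).
rewrite /own_cost => v; exact: (continuousD (continuousM (@cst_continuous _ R 2^-1 v)
  (@continuous_qform R _ (Q nu) v)) (lin_cont 0 0 v)).
Qed.

Lemma continuous_potential : continuous potential.
Proof.
have blockT_cont (BB : forall nu : 'I_N, 'M[R]_(nn nu, m)) :
    mx_continuous (fun x : profile R nn => blockT BB x).
  apply: mx_continuous_sum => nu.
  exact: mx_continuous_mul (mx_continuous_cst (A := (BB nu)^T)) (@mx_continuous_proj R N nn nu).
have phi_cont : continuous (phi a Qy B L).
  apply: continuous_sumr => i x.
  have BQ_cont := mx_continuous_mul (mx_continuous_cst (A := invmx Qy)) (blockT_cont B).
  exact: (continuousM (@cst_continuous _ R (a i 0) x)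
    (continuous_max (BQ_cont i 0 x) (blockT_cont L i 0 x))).
have own_costs_cont : continuous (fun x : profile R nn => \sum_nu own_cost (x nu)).
  apply: continuous_sumr => nu; exact: continuous_block (@continuous_own_cost nu).
move=> x; exact: (continuousD (own_costs_cont x) (phi_cont x)).
Qed.

Lemma nash_of_potential_min X xs : inX X xs ->
  (forall x, inX X x -> potential xs <= potential x) ->
  nash_equilibrium X Q c a Qy B L xs.
Proof.
move=> xsX xs_min; split => // nu v vX.
have := xs_min _ (inX_dfwith xsX vX); rewrite -subr_ge0 potential_dfwith.
by rewrite subr_ge0.
Qed.

Lemma sum_own_cost_ge : (forall nu v, v != 0 -> 0 < qform (Q nu) v) ->
  exists2 lam, 0 < lam &
    exists C, forall x, lam * pnorm x ^+ 2 - C <= \sum_nu own_cost (x nu).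
Proof.
move=> Q_pd.
have /choice [l l_spec] : forall nu, exists l, 0 < l /\
    forall v, l * sqnorm v <= qform (Q nu) v.
  by move=> nu; have [l l_gt0 l_le] := pd_qform_ge (Q_pd nu); exists l.
have [lam lam_gt0 lam_le] := exists_pos_lower_bound (fun nu => (l_spec nu).1).
exists (lam / 4); first by rewrite divr_gt0.
exists (\sum_nu sqnorm (c nu) / lam) => x.
rewrite pnorm_sqr mulr_sumr -sumrB; apply: ler_sum => nu _.
have quad_ge : lam * sqnorm (x nu) <= qform (Q nu) (x nu).
  apply: le_trans ((l_spec nu).2 _); apply: ler_wpM2r; [exact: sqnorm_ge0 | exact: lam_le].
have := young_dot_ge (c nu) (x nu) lam_gt0; rewrite /own_cost; lra.
Qed.

Lemma potential_coercive X (rho w1 w2 : R) :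
  (forall nu v, v != 0 -> 0 < qform (Q nu) v) ->
  (forall x, inX X x -> rho < pnorm x ->
     w1 * pnorm x + w2 <= Num.min 0 (phi a Qy B L x)) ->
  forall y, exists r, forall x, inX X x -> r < pnorm x -> y < potential x.
Proof.
move=> Q_pd phi_ge y; have [lam lam_gt0 [C own_ge]] := sum_own_cost_ge Q_pd.
have [r quad_gt] := quadratic_eventually_gt w1 (y + C - w2) lam_gt0.
exists (Num.max rho r) => x xX; rewrite gt_max => /andP [rho_lt r_lt].
have := quad_gt _ r_lt; have := own_ge x; have := phi_ge x xX rho_lt.
rewrite /potential le_min => /andP [_]; lra.
Qed.

End Game.

Unset Implicit Arguments.
Theorem mainTheorem5 (R : realType) (N : nat) (nn : 'I_N -> nat) (m : nat)
  (Q : forall nu : 'I_N, 'M[R]_(nn nu)) (c : forall nu : 'I_N, 'cV[R]_(nn nu))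
  (X : forall nu : 'I_N, set 'cV[R]_(nn nu))
  (a : 'cV[R]_m) (Qy : 'M[R]_m) (B L : forall nu : 'I_N, 'M[R]_(nn nu, m)) :
  (0 < N)%N -> (0 < m)%N ->
  (forall nu, spd (Q nu)) ->
  (forall nu, X nu !=set0) ->
  (forall nu, convex_set (X nu)) ->
  (forall nu, closed (X nu)) ->
  (forall i, 0 <= a i 0) ->
  pos_diag Qy ->
  (exists (rho w1 w2 : R), 0 <= rho /\
     forall x : profile R nn, inX X x -> rho < pnorm x ->
       Num.min 0 (phi a Qy B L x) >= w1 * pnorm x + w2) ->
  exists xs : profile R nn, nash_equilibrium X Q c a Qy B L xs.
Proof.
move=> _ _ Q_spd X_neq0 _ X_closed _ _ [rho [w1 [w2 [_ phi_ge]]]].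
have Q_pd nu v : v != 0 -> 0 < qform (Q nu) v by exact: (Q_spd nu).2.
have [xs xsX xs_min] := coercive_exists_minimizer (@continuous_potential R N nn m Q c a Qy B L)
  X_closed X_neq0 (potential_coercive c Q_pd phi_ge).
by exists xs; exact: nash_of_potential_min.
Qed.
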